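(* Let $m\in\mathbb{Z}$ be odd and let $(d,v)\in\mathbb{Z}^2$ with $d>0$. There is no decomposition $(d,v)=(d_1,v_1)+(d_2,v_2)$ in $\mathbb{Z}^2$ with $d_1,d_2>0$ satisfying $$\frac{w_1}{d_1}=\frac{w_2}{d_2},\qquad w_1:=v_1-\frac m2d_1d_2,\quad w_2:=v_2+\frac m2d_1d_2,$$ if and only if either $\gcd(d,v)=1$ and $d\not\equiv2\pmod4$, or $\gcd(d,v)=2$ and $d\equiv2\pmod4$. *)

From mathcomp Require Import all_boot all_order all_algebra.
Set Implicit Arguments. Unset Strict Implicit. Unset Printing Implicit Defensive.
Import Order.TTheory GRing.Theory Num.Theory.
Local Open Scope ring_scope.

Definition good_decomp (m d v d1 v1 d2 v2 : int) : Prop :=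
  [/\ 0 < d1, 0 < d2, d = d1 + d2, v = v1 + v2 &
      (v1%:~R - (m%:~R / 2) * d1%:~R * d2%:~R) / (d1%:~R : rat)
      = (v2%:~R + (m%:~R / 2) * d1%:~R * d2%:~R) / (d2%:~R : rat)].

From mathcomp Require Import all_boot all_order all_algebra.
From mathcomp Require Import zify ring.
Import Order.TTheory GRing.Theory Num.Theory.
Local Open Scope ring_scope.

(* Write C(x) := x (x - 1) / 2.  Clearing denominators, the parts (d1, v1) and
   (d - d1, v - v1) form a good decomposition iff
   d1 (v + m C(d)) = d (v1 + m C(d1)), so one exists iff d divides d1 w for
   some 0 < d1 < d, where w := v + m C(d); that is, iff gcd(d, w) <> 1.
   For odd d, d divides C(d) and gcd(d, w) = gcd(d, v).  For d = 2q, oddness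
   of m gives w = v + q mod 2q, so gcd(d, w) = 1 iff gcd(q, v) = 1 and v + q
   is odd; the parity of q yields the two cases of the statement. *)

Definition bin2z (x : int) : int := (x * (x - 1) %/ 2)%Z.

Lemma bin2z_double (x : int) : bin2z x * 2 = x * (x - 1).
Proof.
rewrite /bin2z.
have [k [->|->]] : exists k, x = k * 2 \/ x = k * 2 + 1 by exists (x %/ 2)%Z; lia.
- have -> : k * 2 * (k * 2 - 1) = k * (k * 2 - 1) * 2 by ring.
  by rewrite mulzK.
- have -> : (k * 2 + 1) * (k * 2 + 1 - 1) = (k * 2 + 1) * k * 2 by ring.
  by rewrite mulzK.
Qed.

Lemma coprime2z (x : int) : coprimez 2 x = ~~ (2 %| x)%Z.
Proof. by rewrite coprimezE prime_coprime. Qed.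

Lemma slopes_eq_rat (m d1 v1 d2 v2 : int) : d1 != 0 -> d2 != 0 ->
  ((v1%:~R - (m%:~R / 2) * d1%:~R * d2%:~R) / (d1%:~R : rat)
      = (v2%:~R + (m%:~R / 2) * d1%:~R * d2%:~R) / (d2%:~R : rat)) <->
  2 * (v1 * d2 - v2 * d1) = m * d1 * d2 * (d1 + d2).
Proof.
rewrite -!(intr_eq0 rat) => d1_neq0 d2_neq0.
have cross_diff : (v1%:~R - (m%:~R / 2) * d1%:~R * d2%:~R) * (d2%:~R : rat)
    - (v2%:~R + (m%:~R / 2) * d1%:~R * d2%:~R) * d1%:~R
    = (2 * (v1 * d2 - v2 * d1) - m * d1 * d2 * (d1 + d2))%:~R / 2.
  by field.
rewrite (rwP eqP) eqr_div // -subr_eq0 cross_diff mulf_eq0 invr_eq0 orbF.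
by rewrite intr_eq0 subr_eq0 -(rwP eqP).
Qed.

Lemma good_decompE (m d v d1 v1 d2 v2 : int) :
  good_decomp m d v d1 v1 d2 v2 <->
  [/\ 0 < d1, 0 < d2, d = d1 + d2, v = v1 + v2 &
      d1 * (v + m * bin2z d) = d * (v1 + m * bin2z d1)].
Proof.
suff slopesE : 2 * (v1 * d2 - v2 * d1) = m * d1 * d2 * (d1 + d2) <->
    d1 * (v1 + v2 + m * bin2z (d1 + d2)) = (d1 + d2) * (v1 + m * bin2z d1).
  split=> -[d1_gt0 d2_gt0 -> -> E]; split=> //; move: E;
  by rewrite slopes_eq_rat ?lt0r_neq0 // slopesE.
have defect : 2 * (d1 * (v1 + v2 + m * bin2z (d1 + d2))
                   - (d1 + d2) * (v1 + m * bin2z d1))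
    = m * d1 * d2 * (d1 + d2) - 2 * (v1 * d2 - v2 * d1).
  transitivity (2 * (d1 * v2 - d2 * v1)
      + m * (d1 * (bin2z (d1 + d2) * 2) - (d1 + d2) * (bin2z d1 * 2))).
    by ring.
  by rewrite !bin2z_double; ring.
lia.
Qed.

Lemma good_decomp_existsP (m d v : int) :
  (exists d1 v1 d2 v2 : int, good_decomp m d v d1 v1 d2 v2) <->
  exists2 d1 : int, 0 < d1 < d & (d %| d1 * (v + m * bin2z d))%Z.
Proof.
split.
- move=> [d1 [v1 [d2 [v2 /good_decompE [d1_gt0 d2_gt0 dE _ E]]]]].
  exists d1; first by rewrite d1_gt0 dE ltrDl.
  by apply/dvdzP; exists (v1 + m * bin2z d1); rewrite E mulrC.
- move=> [d1 /andP [d1_gt0 d1_lt_d] /dvdzP [k E]].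
  exists d1, (k - m * bin2z d1), (d - d1), (v - (k - m * bin2z d1)).
  by apply/good_decompE; split; lia.
Qed.

Lemma proper_dvdz_mulP (d w : int) : 0 < d ->
  (exists2 d1 : int, 0 < d1 < d & (d %| d1 * w)%Z) <-> ~~ coprimez d w.
Proof.
move=> d_gt0; split.
- move=> [d1 /andP [d1_gt0 d1_lt_d]]; apply: contraTN => cop_dw.
  rewrite Gauss_dvdzl //; apply/negP => /dvdzP [q d1E].
  by case: (lerP q 0) => ?; nia.
- rewrite /coprimez => g_neq1; set g := gcdz d w in g_neq1 *.
  have g_gt1 : 1 < g.
    have g_neq0 : g != 0 by rewrite gcdz_eq0 negb_and gt_eqF.
    have g_ge0 : 0 <= g by [].
    lia.
  have /dvdzP [d' dE] := dvdz_gcdl d w.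
  have /dvdzP [w' wE] := dvdz_gcdr d w.
  exists d'; first nia.
  by apply/dvdzP; exists w'; rewrite -/g in dE wE; rewrite {1}wE dE; ring.
Qed.

Lemma gcdz_bin2z_odd (m d v : int) : ~~ (2 %| d)%Z ->
  gcdz d (v + m * bin2z d) = gcdz d v.
Proof.
move=> d_odd; have [q dE] : exists q, d = q * 2 + 1 by exists (d %/ 2)%Z; lia.
have bin2zE : bin2z d = q * d.
  by apply: (@mulIf _ 2) => //; rewrite bin2z_double dE; ring.
by rewrite bin2zE mulrA addrC gcdzMDl.
Qed.

Lemma gcdz_bin2z_double (m q v : int) : odd `|m|%N ->
  gcdz (q * 2) (v + m * bin2z (q * 2)) = gcdz (q * 2) (v + q).
Proof.
move=> m_odd; have [a mE] : exists a, m = a * 2 + 1 by exists (m %/ 2)%Z; lia.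
have bin2zE : bin2z (q * 2) = q * (q * 2 - 1).
  by apply: (@mulIf _ 2) => //; rewrite bin2z_double; ring.
have -> : v + m * bin2z (q * 2) = (a * (q * 2 - 1) + q - 1) * (q * 2) + (v + q).
  by rewrite bin2zE mE; ring.
by rewrite gcdzMDl.
Qed.

Lemma coprimez_double_shift (q v : int) :
  coprimez (q * 2) (v + q) = coprimez q v && ~~ (2 %| v + q)%Z.
Proof. by rewrite coprimezMl coprime2z {1}/coprimez gcdzDr. Qed.

Lemma gcdz_double_eq2 (q v : int) : ~~ (2 %| q)%Z ->
  (gcdz (q * 2) v == 2) = (2 %| v)%Z && coprimez q v.
Proof.
move=> q_odd; have [/dvdzP [u ->] | v_odd] := boolP (2 %| v)%Z; last first.
  by apply: contraNF v_odd => /eqP g2; rewrite -g2 dvdz_gcdr.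
rewrite -mulz_gcdl /= coprimezMr (coprimez_sym q 2) coprime2z q_odd andbT.
by rewrite /coprimez -[X in _ == X]mul1r (inj_eq (mulIf _)) ?dvdz_mull.
Qed.

Lemma coprimez_bin2z_shiftP (m d v : int) : odd `|m|%N ->
  coprimez d (v + m * bin2z d) <->
  ((gcdz d v = 1 /\ (d %% 4)%Z != 2) \/ (gcdz d v = 2 /\ (d %% 4)%Z = 2)).
Proof.
move=> m_odd; have [/dvdzP [q ->] | d_odd] := boolP (2 %| d)%Z; last first.
  by rewrite /coprimez gcdz_bin2z_odd //; lia.
rewrite /coprimez gcdz_bin2z_double // -/(coprimez _ _) coprimez_double_shift.
have [q_even | q_odd] := boolP (2 %| q)%Z.
- have -> : (2 %| v + q)%Z = (2 %| v)%Z by lia.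
  by rewrite -coprime2z -coprimezMl /coprimez; lia.
- have -> : (2 %| v + q)%Z = ~~ (2 %| v)%Z by lia.
  by rewrite negbK andbC -gcdz_double_eq2 //; lia.
Qed.

Theorem lemma8p7 (m d v : int) (hm : odd `|m|%N) (hd : 0 < d) :
  ~ (exists d1 v1 d2 v2 : int, good_decomp m d v d1 v1 d2 v2) <->
  ((gcdz d v = 1 /\ (d %% 4)%Z != 2) \/ (gcdz d v = 2 /\ (d %% 4)%Z = 2)).
Proof.
rewrite good_decomp_existsP proper_dvdz_mulP // -(coprimez_bin2z_shiftP _ _ _ hm).
by rewrite (rwP negP) negbK.
Qed.
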